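(* Let $d\ge1$ and let $G$ be obtained from an $\mathcal{R}_d$-independent graph by adding at most $2$ edges. Then $G$ is $\mathcal{R}_{d+1}$-independent.
   Context: For a graph $G=(V,E)$ and a generic $p:V\to\mathbb{R}^d$ (coordinates algebraically independent over $\mathbb{Q}$), the rigidity matrix has a row for each $uv\in E$ with $p(u)-p(v)$ in the $d$ columns of $u$, $p(v)-p(u)$ in those of $v$, zeros elsewhere; $\mathcal{R}_d$ is its row matroid, with rank $r_d$. A graph with edge set $F$ is $\mathcal{R}_d$-independent if $r_d(F)=|F|$. Graphs are simple; added edges join existing non-adjacent vertices. *)

From HB Require Import structures.
From mathcomp Require Import all_boot all_order all_algebra.
From mathcomp Require Import mpoly.
From mathcomp Require Import reals.
Set Implicit Arguments. Unset Strict Implicit. Unset Printing Implicit Defensive.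
Import Order.TTheory GRing.Theory Num.Theory.
Local Open Scope ring_scope.

(* A realisation p : V -> R^d is generic when its coordinates
   (p v) k, (v,k) in V * 'I_d, are algebraically independent over Q:
   no nonzero rational polynomial in #|V|*d variables vanishes at them. *)
Definition generic (R : realType) (d : nat) (V : finType) (p : V -> 'rV[R]_d) : Prop :=
  forall q : {mpoly rat[#|{: V * 'I_d}|]}, q != 0 ->
    mmap (@ratr R) (fun i => let: (v, k) := enum_val i in p v 0 k) q != 0.

(* Row of the rigidity matrix for the edge e = {u,v}: in the block of w,
   it is \sum_(x in e) (p w - p x), i.e. p u - p v for w = u,
   p v - p u for w = v, and 0 otherwise. *)
Definition rig_row (R : realType) (d : nat) (V : finType) (p : V -> 'rV[R]_d)
  (e : {set V}) (w : V) : 'rV[R]_d :=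
  if w \in e then \sum_(x in e) (p w - p x) else 0.

Definition Rd_indep (R : realType) (d : nat) (V : finType) (F : {set {set V}}) : Prop :=
  forall p : V -> 'rV[R]_d, generic p ->
    forall c : {set V} -> R,
      (forall w : V, \sum_(e in F) c e *: rig_row p e w = 0) ->
      forall e, e \in F -> c e = 0.

(* Let p be generic in dimension d+1 and let q forget its last coordinate. The
   coordinates of q are a subfamily of those of p, so q is generic and E0 is
   independent at q. A stress of E at the extension of q by heights z : V -> R
   is a stress of E at q that is also a one-dimensional stress for z. Since E0
   is independent, the stresses of E at q are determined by their values on the
   at most two edges f, g of E \ E0, and some z kills them all: the indicator
   of an endpoint of f or of g, or, when each of these fails, the sum of the
   indicators of an endpoint of f and an endpoint of g. Finally, E is
   independent at a realisation iff the Gram determinant of its rigidity matrix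
   is nonzero; this determinant is a rational polynomial in the coordinates
   which does not vanish at (q, z), hence is a nonzero polynomial, hence does
   not vanish at the generic p. *)

From Stdlib Require Import Classical.
From HB Require Import structures.
From mathcomp Require Import all_boot all_order all_algebra.
From mathcomp Require Import mpoly.
From mathcomp Require Import reals.
Set Implicit Arguments. Unset Strict Implicit. Unset Printing Implicit Defensive.
Import Order.TTheory GRing.Theory Num.Theory.
Local Open Scope ring_scope.

Section MPolyEval.
Variables (K S : comNzRingType) (f : {rmorphism K -> S}).

Lemma mmap_eq n (x y : 'I_n -> S) (q : {mpoly K[n]}) :
  x =1 y -> mmap f x q = mmap f y q.
Proof. by move=> xy; apply: eq_bigr => m _; rewrite (mmap1_eq _ xy). Qed.

Lemma mmap_comp n k (x : 'I_k -> S) (h : 'I_n -> {mpoly K[k]}) (q : {mpoly K[n]}) :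
  mmap f x (mmap (@mpolyC k K) h q) = mmap f (fun i => mmap f x (h i)) q.
Proof.
rewrite [q]mpolyE (raddf_sum (mmap _ h)) (raddf_sum (mmap f x)) raddf_sum /=.
apply: eq_bigr => m _; rewrite !mmapZ !mmapX rmorphM /= mmapC /mmap1 rmorph_prod.
by congr (_ * _); apply: eq_bigr => i _; rewrite rmorphXn.
Qed.

End MPolyEval.

Section AlgebraicIndependence.
Variables (K S : comNzRingType) (f : {rmorphism K -> S}).

Definition alg_indep n (x : 'I_n -> S) :=
  forall q : {mpoly K[n]}, q != 0 -> mmap f x q != 0.

Lemma alg_indep_comp n k (x : 'I_k -> S) (s : 'I_n -> 'I_k) :
  injective s -> alg_indep x -> alg_indep (x \o s).
Proof.
move=> s_inj x_indep q q_neq0.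
pose rename := mmap (@mpolyC k K) (fun i => 'X_(s i)) q.
pose unrename j : {mpoly K[n]} := if [pick i | s i == j] is Some i then 'X_i else 0.
have renameE : mmap f x rename = mmap f (x \o s) q.
  by rewrite mmap_comp; apply: mmap_eq => i; rewrite mmapX mmap1U.
have renameK : mmap (@mpolyC n K) unrename rename = q.
  rewrite mmap_comp -[RHS]comp_mpoly_id /comp_mpoly; apply: mmap_eq => i.
  rewrite mmapX mmap1U /unrename tnth_map tnth_ord_tuple.
  by case: pickP => [i' /eqP/s_inj -> // | /(_ i)]; rewrite eqxx.
rewrite -renameE; apply: x_indep; apply: contraNneq q_neq0 => rename0.
by rewrite -renameK rename0 mmap0.
Qed.

End AlgebraicIndependence.

Section GramMatrix.
Variable F : realFieldType.

Lemma mulmx_trmx_eq0 n (x : 'rV[F]_n) : x *m x^T = 0 -> x = 0.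
Proof.
move=> /(congr1 (fun A : 'M_1 => A 0 0)); rewrite !mxE.
under eq_bigr do rewrite mxE.
move/psumr_eq0P => sq0; apply/rowP => j; rewrite mxE.
have /eqP := sq0 (fun i _ => sqr_ge0 (x 0 i)) j isT.
by rewrite mulf_eq0 orbb => /eqP.
Qed.

Lemma row_free_gram m n (M : 'M[F]_(m, n)) : row_free M = (M *m M^T \in unitmx).
Proof.
rewrite -row_free_unit; apply/idP/idP => [M_free | MM_free]; apply: inj_row_free => v.
  move=> vMM0; apply/eqP; rewrite -(mulmx_free_eq0 _ M_free); apply/eqP/mulmx_trmx_eq0.
  by rewrite trmx_mul mulmxA -(mulmxA v) vMM0 mul0mx.
by move=> vM0; apply/eqP; rewrite -(mulmx_free_eq0 _ MM_free) mulmxA vM0 mul0mx.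
Qed.

End GramMatrix.

Lemma subset_pair_of_card_le2 (T : finType) (D : {set T}) :
  (#|D| <= 2)%N -> D != set0 -> exists f g, [/\ f \in D, g \in D & D \subset [set f; g]].
Proof.
rewrite leq_eqVlt ltnS leq_eqVlt ltnS leqn0 cards_eq0 => /or3P[| |/eqP->]; last first.
- by rewrite eqxx.
- move=> /cards1P[f ->] _; exists f, f; rewrite !inE eqxx; split=> //.
  by apply/subsetP => u; rewrite !inE => ->.
move=> /cards2P[f [g [_ ->]]] _; exists f, g.
by rewrite !inE !eqxx orbT.
Qed.

Section ScalarRigidityRow.
Variables (S : nzRingType) (V : finType).
Implicit Types (y : V -> S) (E : {set {set V}}) (c : {set V} -> S) (e : {set V}).

Definition rig_row1 y e (w : V) : S := if w \in e then \sum_(x in e) (y w - y x) else 0.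

Definition stress1 y E c := forall w, \sum_(e in E) c e * rig_row1 y e w = 0.

Definition delta (a : V) : V -> S := fun x => (x == a)%:R.

Definition vanish_at E c (a : V) := {in E, forall e, a \in e -> c e = 0}.

Definition edge_sum E c (u w : V) := \sum_(e in E | (u \in e) && (w \in e)) c e.

Lemma eq_rig_row1 y1 y2 : y1 =1 y2 -> rig_row1 y1 =2 rig_row1 y2.
Proof.
move=> y12 e w; rewrite /rig_row1; case: ifP => // _.
by apply: eq_bigr => x _; rewrite !y12.
Qed.

Lemma rig_row1D y1 y2 e w :
  rig_row1 (fun x => y1 x + y2 x) e w = rig_row1 y1 e w + rig_row1 y2 e w.
Proof.
rewrite /rig_row1; case: ifP => _; last by rewrite addr0.
by rewrite -big_split; apply: eq_bigr => x _; rewrite opprD addrACA.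
Qed.

Lemma rig_row1_delta a e w :
  w != a -> rig_row1 (delta a) e w = - ((w \in e) && (a \in e))%:R.
Proof.
move=> wa; rewrite /rig_row1 /delta (negbTE wa); case: (w \in e); last by rewrite oppr0.
rewrite sumrB big1 // sub0r /=; congr (- _).
have [ae | nae] := boolP (a \in e).
  by rewrite (bigD1 a) //= eqxx big1 ?addr0 // => x /andP[_ /negbTE ->].
by rewrite big1 // => x xe; case: eqP xe => // ->; rewrite (negbTE nae).
Qed.

Lemma stress1_delta_at E c a w :
  w != a -> \sum_(e in E) c e * rig_row1 (delta a) e w = - edge_sum E c w a.
Proof.
move=> wa; rewrite /edge_sum big_mkcondr -sumrN; apply: eq_bigr => e _.
rewrite rig_row1_delta // mulrN.
by case: ifP => _ /=; rewrite ?mulr1n ?mulr0n ?mulr1 ?mulr0.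
Qed.

Variable E : {set {set V}}.
Hypothesis pairsE : {in E, forall e, #|e| = 2%N}.

Lemma edge_sum_edge c f u w :
  f \in E -> u \in f -> w \in f -> u != w -> edge_sum E c u w = c f.
Proof.
move=> fE uf wf uw; have pairE e : e \in E -> u \in e -> w \in e -> e = [set u; w].
  move=> eE ue we; apply/eqP; rewrite eq_sym eqEcard cards2 uw pairsE //= andbT.
  by apply/subsetP => x; rewrite !inE => /orP[] /eqP ->.
rewrite /edge_sum (big_pred1 f) // => e /=; apply/idP/eqP => [/and3P[eE ue we]|->].
  by rewrite (pairE e) // (pairE f).
by rewrite fE uf wf.
Qed.

Lemma stress1_delta_vanish c a : stress1 (delta a) E c -> vanish_at E c a.
Proof.
move=> stress_c e eE ae.
have /cards1P[w ew] : #|e :\ a| == 1%N.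
  by move: (pairsE eE); rewrite (cardsD1 a) ae => -[<-].
have : w \in e :\ a by rewrite ew set11.
rewrite !inE => /andP[wa we]; apply/eqP; rewrite -oppr_eq0.
by rewrite -(edge_sum_edge c eE we ae wa) -stress1_delta_at // stress_c.
Qed.

End ScalarRigidityRow.

Arguments delta {S V} a.

Section ExtraCoordinate.
Variables (F : fieldType) (V : finType) (E : {set {set V}}).
Implicit Types (c : {set V} -> F) (e f g : {set V}).
Hypothesis pairsE : {in E, forall e, #|e| = 2%N}.
Variable St : ({set V} -> F) -> Prop.
Hypothesis St_sub : forall c c' t, St c -> St c' -> St (fun e => c e - t * c' e).

Definition determined_by f g :=
  forall c, St c -> c f = 0 -> c g = 0 -> {in E, forall e, c e = 0}.

Definition kills_stresses (z : V -> F) :=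
  forall c, St c -> stress1 z E c -> {in E, forall e, c e = 0}.

Lemma determined_byC f g : determined_by f g -> determined_by g f.
Proof. by move=> det c Sc cg cf; apply: det. Qed.

Lemma delta_witness f g a :
  f \in E -> determined_by f g -> a \in f -> ~ kills_stresses (delta a) ->
  exists c, [/\ St c, vanish_at E c a & c g != 0].
Proof.
move=> fE det af not_kills; apply: NNPP => no_witness; apply: not_kills => c Sc stress_c.
have c_a := stress1_delta_vanish pairsE stress_c.
apply: det => //; first exact: c_a.
by have [//|cg] := eqVneq (c g) 0; case: no_witness; exists c.
Qed.

Lemma stress_decomp f g c1 c2 c :
  determined_by f g -> St c1 -> St c2 -> St c ->
  c1 g = 0 -> c2 f = 0 -> c1 f != 0 -> c2 g != 0 ->
  {in E, forall e, c e = c f / c1 f * c1 e + c g / c2 g * c2 e}.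
Proof.
move=> det S1 S2 Sc c1g c2f c1f c2g e eE; apply/eqP; rewrite -subr_eq0 opprD addrA.
apply/eqP; move: e eE; apply: det (St_sub _ (St_sub _ Sc S1) S2) _ _ => /=.
  by rewrite c2f mulr0 subr0 divfK // subrr.
by rewrite c1g mulr0 subr0 divfK // subrr.
Qed.

(* Every stress is a combination of [c1], which vanishes at [a'] and [b'], and
   [c2], which vanishes at [a] and [b]. So it vanishes on the edges [ba'] and
   [ab'], and equilibrium at [b] and at [b'] for the heights
   [delta a + delta a'] forces [c f = 0] and [c g = 0]. *)
Lemma kills_delta2 a b a' b' c1 c2 (f := [set a; b]) (g := [set a'; b']) :
  a != b -> a' != b' -> f \in E -> g \in E -> determined_by f g ->
  St c1 -> St c2 -> vanish_at E c1 a' -> vanish_at E c1 b' ->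
  vanish_at E c2 a -> vanish_at E c2 b -> c1 f != 0 -> c2 g != 0 ->
  kills_stresses (fun x => delta a x + delta a' x).
Proof.
move=> ab ab' fE gE det S1 S2 c1a' c1b' c2a c2b c1f c2g c Sc stress_c.
have [af bf] : a \in f /\ b \in f by rewrite /f !inE !eqxx orbT.
have [a'g b'g] : a' \in g /\ b' \in g by rewrite /g !inE !eqxx orbT.
have c1g : c1 g = 0 by apply: c1a'.
have c2f : c2 f = 0 by apply: c2a.
have ba' : b != a' by apply: contraNneq c1f => ba'; apply/eqP/c1a'; rewrite // -ba'.
have b'a : b' != a by apply: contraNneq c2g => b'a; apply/eqP/c2a; rewrite // -b'a.
have cE := stress_decomp det S1 S2 Sc c1g c2f c1f c2g.
have c_ba' : edge_sum E c b a' = 0.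
  apply: big1 => e /andP[eE /andP[be a'e]].
  by rewrite cE // (c1a' e eE a'e) (c2b e eE be) !mulr0 addr0.
have c_b'a : edge_sum E c b' a = 0.
  apply: big1 => e /andP[eE /andP[b'e ae]].
  by rewrite cE // (c1b' e eE b'e) (c2a e eE ae) !mulr0 addr0.
have equilibrium w : w != a -> w != a' -> edge_sum E c w a + edge_sum E c w a' = 0.
  move=> wa wa'; apply/eqP; rewrite -oppr_eq0 opprD -!stress1_delta_at //.
  rewrite -big_split /= -[X in _ == X](stress_c w); apply/eqP; apply: eq_bigr => e _.
  by rewrite rig_row1D mulrDr.
have ba : b != a by rewrite eq_sym.
have b'a' : b' != a' by rewrite eq_sym.
apply: det => //.
  have := equilibrium b ba ba'.
  by rewrite c_ba' addr0 (edge_sum_edge pairsE c fE bf af ba).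
have := equilibrium b' b'a b'a'.
by rewrite c_b'a add0r (edge_sum_edge pairsE c gE b'g a'g b'a').
Qed.

Lemma exists_kills_stresses f g :
  f \in E -> g \in E -> determined_by f g -> exists z, kills_stresses z.
Proof.
move=> fE gE det; case: (classic (exists z, kills_stresses z)) => // no_z.
have not_kills a : ~ kills_stresses (delta a).
  by move=> kills_a; apply: no_z; exists (delta a).
have /cards2P[a [b [ab fab]]] : #|f| == 2%N by rewrite pairsE.
have /cards2P[a' [b' [ab' gab']]] : #|g| == 2%N by rewrite pairsE.
have [af bf] : a \in f /\ b \in f by rewrite fab !inE !eqxx orbT.
have [a'g b'g] : a' \in g /\ b' \in g by rewrite gab' !inE !eqxx orbT.
have [c2 [S2 c2a c2g]] := delta_witness fE det af (not_kills a).
have [c2' [S2' c2'b c2'g]] := delta_witness fE det bf (not_kills b).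
have [c1 [S1 c1a' c1f]] := delta_witness gE (determined_byC det) a'g (not_kills a').
have [c1' [S1' c1'b' c1'f]] := delta_witness gE (determined_byC det) b'g (not_kills b').
have c1g : c1 g = 0 by apply: c1a'.
have c1'g : c1' g = 0 by apply: c1'b'.
have c2f : c2 f = 0 by apply: c2a.
have c2'f : c2' f = 0 by apply: c2'b.
(* [c2] and [c2'] both vanish on [f], hence are proportional; same for [c1], [c1']. *)
have c2b : vanish_at E c2 b.
  move=> e eE be; rewrite (stress_decomp det S1 S2' S2 c1g c2'f c1f c2'g eE).
  by rewrite c2f (c2'b e eE be) !mul0r mulr0 add0r.
have c1b' : vanish_at E c1 b'.
  move=> e eE b'e; rewrite (stress_decomp det S1' S2 S1 c1'g c2f c1'f c2g eE).
  by rewrite c1g (c1'b' e eE b'e) mulr0 !mul0r addr0.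
exists (fun x => delta a x + delta a' x); subst f g.
exact: (kills_delta2 ab ab' fE gE det S1 S2 c1a' c1b' c2a c2b c1f c2g).
Qed.

End ExtraCoordinate.

Section RigidityMatrix.
Variable V : finType.

(* Columns are numbered as the variables in [generic]. *)
Definition rigidity_mx (S : nzRingType) m (E : {set {set V}})
    (x : 'I_#|{: V * 'I_m}| -> S) : 'M[S]_(#|E|, #|{: V * 'I_m}|) :=
  \matrix_(i, j) let: (w, k) := enum_val j in
    rig_row1 (fun v => x (enum_rank (v, k))) (enum_val i) w.

Lemma map_rigidity_mx (S T : nzRingType) (f : {rmorphism S -> T}) m (E : {set {set V}})
    (x : 'I_#|{: V * 'I_m}| -> S) y :
  f \o x =1 y -> map_mx f (rigidity_mx E x) = rigidity_mx E y.
Proof.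
move=> fxy; apply/matrixP => i j; rewrite !mxE; case: (enum_val j) => w k.
rewrite /rig_row1; case: ifP => _; last exact: rmorph0.
by rewrite rmorph_sum; apply: eq_bigr => u _; rewrite rmorphB -!fxy.
Qed.

End RigidityMatrix.

Section Realisations.
Variables (R : realType) (V : finType).
Implicit Types (E : {set {set V}}) (c : {set V} -> R) (e : {set V}).

Definition stress m (P : V -> 'rV[R]_m) E c :=
  forall w, \sum_(e in E) c e *: rig_row P e w = 0.

Definition indep_at m (P : V -> 'rV[R]_m) E :=
  forall c, stress P E c -> {in E, forall e, c e = 0}.

Definition coords m (P : V -> 'rV[R]_m) : 'I_#|{: V * 'I_m}| -> R :=
  fun i => let: (v, k) := enum_val i in P v 0 k.

Definition extend m (q : V -> 'rV[R]_m) (z : V -> R) : V -> 'rV[R]_m.+1 :=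
  fun v => \row_j if unlift ord_max j is Some k then q v 0 k else z v.

Definition proj m (p : V -> 'rV[R]_m.+1) : V -> 'rV[R]_m :=
  fun v => \row_k p v 0 (lift ord_max k).

Lemma rig_row_coord m (P : V -> 'rV[R]_m) e w k :
  rig_row P e w 0 k = rig_row1 (fun v => P v 0 k) e w.
Proof.
rewrite /rig_row /rig_row1; case: ifP => _; last by rewrite mxE.
by rewrite summxE; apply: eq_bigr => x _; rewrite !mxE.
Qed.

Lemma stress_coord m (P : V -> 'rV[R]_m) E c w k :
  (\sum_(e in E) c e *: rig_row P e w) 0 k =
  \sum_(e in E) c e * rig_row1 (fun v => P v 0 k) e w.
Proof. by rewrite summxE; apply: eq_bigr => e _; rewrite mxE rig_row_coord. Qed.

Lemma stressP m (P : V -> 'rV[R]_m) E c :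
  stress P E c <-> forall k, stress1 (fun v => P v 0 k) E c.
Proof.
split=> [stress_c k w | stress_c w]; first by rewrite -stress_coord stress_c mxE.
by apply/rowP => k; rewrite stress_coord stress_c mxE.
Qed.

Lemma stress_sub m (P : V -> 'rV[R]_m) E c c' t :
  stress P E c -> stress P E c' -> stress P E (fun e => c e - t * c' e).
Proof.
move=> stress_c stress_c' w.
rewrite (eq_bigr (fun e => c e *: rig_row P e w - t *: (c' e *: rig_row P e w))).
  by rewrite sumrB -scaler_sumr stress_c stress_c' scaler0 subr0.
by move=> e _; rewrite scalerBl scalerA.
Qed.

Lemma stress_extend m (q : V -> 'rV[R]_m) z E c :
  stress (extend q z) E c -> stress q E c /\ stress1 z E c.
Proof.
move/stressP => stress_c; split; first apply/stressP => k w.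
  rewrite -[RHS](stress_c (lift ord_max k) w); apply: eq_bigr => e _.
  by congr (_ * _); apply: eq_rig_row1 => v; rewrite mxE liftK.
move=> w; rewrite -[RHS](stress_c ord_max w); apply: eq_bigr => e _.
by congr (_ * _); apply: eq_rig_row1 => v; rewrite mxE unlift_none.
Qed.

Lemma exists_indep_extend m (q : V -> 'rV[R]_m) E0 E :
  {in E, forall e, #|e| = 2%N} -> E0 \subset E -> (#|E :\: E0| <= 2)%N ->
  indep_at q E0 -> exists z, indep_at (extend q z) E.
Proof.
move=> pairsE sE0E cardD indE0.
have stress_new c : stress q E c -> {in E :\: E0, forall e, c e = 0} ->
    {in E, forall e, c e = 0}.
  move=> stress_c cD e eE; have [eE0 | eNE0] := boolP (e \in E0); last first.
    by apply: cD; rewrite inE eNE0.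
  apply: indE0 eE0 => w.
  rewrite -[RHS](stress_c w) [in RHS](big_setID E0) /= (setIidPr sE0E).
  by rewrite [X in _ = _ + X]big1 ?addr0 // => e' /cD ->; rewrite scale0r.
have extend_indep z : kills_stresses E (stress q E) z -> indep_at (extend q z) E.
  by move=> kills_z c /stress_extend[]; apply: kills_z.
have [D0 | D_neq0] := eqVneq (E :\: E0) set0.
  exists (fun=> 0); apply: extend_indep => c stress_c _; apply: stress_new stress_c _ => e.
  by rewrite D0 inE.
have [f [g [fD gD Dfg]]] := subset_pair_of_card_le2 cardD D_neq0.
have [fE gE] : f \in E /\ g \in E by move: fD gD; rewrite !inE => /andP[_ ->] /andP[_ ->].
have det : determined_by E (stress q E) f g.
  move=> c stress_c cf cg; apply: stress_new stress_c _ => e /(subsetP Dfg).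
  by rewrite !inE => /orP[] /eqP ->.
have [z kills_z] := exists_kills_stresses pairsE (@stress_sub m q E) fE gE det.
by exists z; apply: extend_indep.
Qed.

Lemma rigidity_mx_coords m (P : V -> 'rV[R]_m) E c w k :
  (\row_i c (enum_val i) *m rigidity_mx E (coords P)) 0 (enum_rank (w, k)) =
  (\sum_(e in E) c e *: rig_row P e w) 0 k.
Proof.
rewrite stress_coord mxE [RHS]big_enum_val /=; apply: eq_bigr => i _.
rewrite !mxE enum_rankK; congr (_ * _); apply: eq_rig_row1 => v.
by rewrite /coords enum_rankK.
Qed.

Lemma indep_atE m (P : V -> 'rV[R]_m) E :
  indep_at P E <-> row_free (rigidity_mx E (coords P)).
Proof.
set M := rigidity_mx E (coords P).
have stressE c : stress P E c <-> \row_i c (enum_val i) *m M = 0.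
  split=> [stress_c | Mc0 w]; last first.
    by apply/rowP => k; rewrite -rigidity_mx_coords Mc0 !mxE.
  apply/rowP => j; rewrite -(enum_valK j); case: (enum_val j) => w k.
  by rewrite rigidity_mx_coords stress_c !mxE.
split=> [indep | M_free c /stressE Mc0 e eE].
  apply: inj_row_free => u uM0.
  pose c e := \sum_(i | enum_val i == e) u 0 i.
  have cE i : c (enum_val i) = u 0 i.
    by rewrite /c (big_pred1 i) // => i'; rewrite /= (inj_eq enum_val_inj).
  have u_c : u = \row_i c (enum_val i) by apply/rowP => i; rewrite !mxE cE.
  apply/rowP => i; rewrite mxE -cE; apply: indep (enum_valP i).
  by apply/stressE; rewrite -u_c.
have c0 : \row_i c (enum_val i) = 0 :> 'rV_#|E|.
  by apply/eqP; rewrite -(mulmx_free_eq0 _ M_free) Mc0.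
have := congr1 (fun u : 'rV_#|E| => u 0 (enum_rank_in eE e)) c0.
by rewrite !mxE enum_rankK_in.
Qed.

Lemma indep_at_generic m (P p : V -> 'rV[R]_m) E :
  indep_at P E -> generic p -> indep_at p E.
Proof.
rewrite !indep_atE !row_free_gram !unitmxE !unitfE => P_indep p_gen.
pose X := rigidity_mx E (fun i => 'X_i : {mpoly rat[#|{: V * 'I_m}|]}).
have gramE Q : \det (rigidity_mx E (coords Q) *m (rigidity_mx E (coords Q))^T) =
    mmap (@ratr R) (coords Q) (\det (X *m X^T)).
  have evalX : mmap (@ratr R) (coords Q) \o (fun i => 'X_i) =1 coords Q.
    by move=> i /=; rewrite mmapX mmap1U.
  by rewrite -det_map_mx map_mxM -map_trmx (map_rigidity_mx _ evalX).
rewrite gramE; apply: p_gen; apply: contraNneq P_indep => X0.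
by rewrite gramE X0 mmap0.
Qed.

Lemma generic_proj m (p : V -> 'rV[R]_m.+1) : generic p -> generic (proj p).
Proof.
pose s (i : 'I_#|{: V * 'I_m}|) : 'I_#|{: V * 'I_m.+1}| :=
  let: (v, k) := enum_val i in enum_rank (v, lift ord_max k).
have s_inj : injective s.
  move=> i j; rewrite /s; case Ei: (enum_val i) => [v k]; case Ej: (enum_val j) => [v' k'].
  move/enum_rank_inj/eqP; rewrite xpair_eqE (inj_eq lift_inj) => /andP[/eqP vv' /eqP kk'].
  by apply: enum_val_inj; rewrite Ei Ej vv' kk'.
have sE : coords p \o s =1 coords (proj p).
  by move=> i; rewrite /= /s /coords; case: (enum_val i) => v k; rewrite enum_rankK mxE.
by move=> p_gen q /(alg_indep_comp s_inj p_gen); rewrite (mmap_eq _ q sE).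
Qed.

End Realisations.

Theorem corollary4p13 (R : realType) (d : nat) (V : finType)
  (E0 E : {set {set V}}) :
  (1 <= d)%N ->
  (forall e, e \in E -> (#|e| = 2)%N) ->
  E0 \subset E ->
  (#|E :\: E0| <= 2)%N ->
  Rd_indep R d E0 ->
  Rd_indep R d.+1 E.
Proof.
(* The argument works for every d. *)
move=> _ pairsE sE0E cardD indE0 p p_gen.
have [z indz] := exists_indep_extend pairsE sE0E cardD (indE0 _ (generic_proj p_gen)).
exact: indep_at_generic indz p_gen.
Qed.
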